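(* Let $e,f$ be essential edges of a multigraph $H$, and let $W$ be any walk in $H$ that starts with $e$, ends with $f$, and traverses every edge at most once. Then every edge traversed by $W$ is essential.
   Context: Multigraphs are undirected and may contain parallel edges and self-loops (a self-loop is a cycle of length one, two parallel edges form a cycle of length two). An edge $e$ of $H$ is essential if it lies on a cycle of $H$, or it is a bridge whose removal creates two new connected components each of which contains a cycle. *)

(* Finite multigraphs: a finite vertex type V, a finite edge
   type E, and an endpoint map [ends : E -> V * V] (read as an unordered pair;
   parallel edges = distinct edges with the same endpoints, a self-loop is an
   edge with [ends e = (v, v)]). *)
From mathcomp Require Import all_boot.
Set Implicit Arguments. Unset Strict Implicit. Unset Printing Implicit Defensive.

Section Multigraph.
Variables (V E : finType) (ends : E -> V * V).

Definition joins (e : E) (u v : V) : bool :=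
  (ends e == (u, v)) || (ends e == (v, u)).

(* A walk starting at vertex [x] is given by its list of steps [(e_i, v_i)]:
   the walk x = v_0, e_1, v_1, ..., e_k, v_k, where e_i joins v_(i-1), v_i. *)
Fixpoint is_walk (x : V) (s : seq (E * V)) : bool :=
  if s is (e, y) :: s' then joins e x y && is_walk y s' else true.

Definition walk_edges (s : seq (E * V)) : seq E := map fst s.
Definition walk_end (x : V) (s : seq (E * V)) : V := last x (map snd s).

(* A cycle: a nonempty closed walk with pairwise distinct edges and pairwise
   distinct vertices v_1, ..., v_k (v_k = v_0).  Length one = self-loop,
   length two = two parallel edges. *)
Definition is_cycle (x : V) (s : seq (E * V)) : bool :=
  [&& is_walk x s, s != [::], walk_end x s == x,
      uniq (walk_edges s) & uniq (map snd s)].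

Definition on_cycle (e : E) : Prop :=
  exists x s, is_cycle x s /\ e \in walk_edges s.

Definition connected_without (e : E) (u v : V) : Prop :=
  exists s, [/\ is_walk u s, e \notin walk_edges s & walk_end u s = v].

(* bridge: removing e disconnects its two endpoints (so loops are never bridges) *)
Definition is_bridge (e : E) : Prop :=
  ~ connected_without e (ends e).1 (ends e).2.

Definition side_has_cycle (e : E) (w : V) : Prop :=
  exists x s, [/\ is_cycle x s, e \notin walk_edges s & connected_without e w x].

Definition essential (e : E) : Prop :=
  on_cycle e \/
  (is_bridge e /\ side_has_cycle e (ends e).1 /\ side_has_cycle e (ends e).2).

End Multigraph.

(* Let g be an edge of W other than e and f that lies on no cycle.  Then g is
   a bridge: a path between its endpoints avoiding g would close up into a
   cycle through g.  Removing g from W leaves a prefix containing e and ending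
   at one endpoint of g, and a suffix containing f and starting at the other,
   so it suffices that the side of g reached from an essential edge e <> g
   contains a cycle.  If e lies on a cycle, that cycle avoids g.  If e is a
   bridge, at least one of the two sides of e does not reach g in H - e, and
   the cycle on that side survives in H - g. *)
From Stdlib Require Import Classical.
From mathcomp Require Import all_boot.
Set Implicit Arguments. Unset Strict Implicit. Unset Printing Implicit Defensive.

Lemma map_split (A B : eqType) (f : A -> B) (s : seq A) (y : B) :
  y \in map f s -> exists s1 a s2, s = s1 ++ a :: s2 /\ f a = y.
Proof. by case/mapP=> a /splitPr [s1 s2] ->; exists s1, a, s2. Qed.

Lemma ohead_cat_cons (T : eqType) (l1 l2 : seq T) h e :
  ohead (l1 ++ h :: l2) = Some e -> e = h \/ e \in l1.
Proof. by case: l1 => [|y l1] /= [->]; [left | right; rewrite mem_head]. Qed.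

Lemma ohead_rev_cat_cons (T : eqType) (l1 l2 : seq T) h f :
  ohead (rev (l1 ++ h :: l2)) = Some f -> f = h \/ f \in l2.
Proof. by rewrite rev_cat rev_cons cat_rcons => /ohead_cat_cons; rewrite mem_rev. Qed.

Section Multigraph.
Variables (V E : finType) (ends : E -> V * V).
Local Notation walk := (is_walk ends).
Local Notation conn := (connected_without ends).
Implicit Types (u v w x y : V) (s t c : seq (E * V)) (e g h k : E).

Lemma joinsC e u v : joins ends e u v = joins ends e v u.
Proof. by rewrite /joins orbC. Qed.

Lemma joins_ends e u v : joins ends e u v -> ends e = (u, v) \/ ends e = (v, u).
Proof. by case/orP=> /eqP; [left | right]. Qed.

Lemma joins_endpoints e : joins ends e (ends e).1 (ends e).2.
Proof. by rewrite /joins -surjective_pairing eqxx. Qed.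

Lemma is_walk_cat x s t : walk x (s ++ t) = walk x s && walk (walk_end x s) t.
Proof. by elim: s x => [|[e y] s IHs] x //=; rewrite IHs andbA. Qed.

Lemma walk_end_cat x s t : walk_end x (s ++ t) = walk_end (walk_end x s) t.
Proof. by rewrite /walk_end map_cat last_cat. Qed.

Lemma walk_edges_cat s t : walk_edges (s ++ t) = walk_edges s ++ walk_edges t.
Proof. exact: map_cat. Qed.

Lemma is_cycle_walk x c : is_cycle ends x c -> walk x c.
Proof. by case/and5P. Qed.

Lemma is_walk_rev x s : walk x s -> exists t,
  [/\ walk (walk_end x s) t, walk_end (walk_end x s) t = x
    & walk_edges t = rev (walk_edges s)].
Proof.
elim/last_ind: s => [|s [e y] IHs]; first by exists [::].
rewrite -cats1 is_walk_cat /= andbT => /andP [Hs Hj].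
have [t [Ht Et Ft]] := IHs Hs.
exists ((e, walk_end x s) :: t); rewrite walk_end_cat /= joinsC Hj.
by rewrite walk_edges_cat rev_cat /= -Ft.
Qed.

Lemma connected_without_walk k x s :
  walk x s -> k \notin walk_edges s -> conn k x (walk_end x s).
Proof. by exists s. Qed.

Lemma connected_without_trans k u v w : conn k u v -> conn k v w -> conn k u w.
Proof.
move=> [s [Hs ks <-]] [t [Ht kt <-]]; exists (s ++ t); split.
- by rewrite is_walk_cat Hs Ht.
- by rewrite walk_edges_cat mem_cat negb_or ks kt.
- by rewrite walk_end_cat.
Qed.

Lemma connected_without_sym k u v : conn k u v -> conn k v u.
Proof.
move=> [s [Hs ks <-]]; have [t [Ht Et Ft]] := is_walk_rev Hs.
by exists t; split; rewrite // Ft mem_rev.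
Qed.

Lemma connected_without_ends h k : h != k -> conn k (ends h).1 (ends h).2.
Proof.
move=> hk; exists [:: (h, (ends h).2)]; split=> //.
- by rewrite /= joins_endpoints.
- by rewrite /= mem_seq1 eq_sym.
Qed.

Lemma connected_without_walk_ends k h y c :
  walk y c -> h \in walk_edges c -> k \notin walk_edges c ->
  conn k y (ends h).1 /\ conn k y (ends h).2.
Proof.
move=> Hc /map_split [c1 [[h' z] [c2 [Ec /= Eh]]]]; subst c h'.
move: Hc; rewrite is_walk_cat /= => /and3P [Hc1 Hj _].
rewrite walk_edges_cat mem_cat /= in_cons !negb_or => /and3P [kc1 kh _].
have C1 := connected_without_walk Hc1 kc1.
have C2 : conn k y z.
  exists (rcons c1 (h, z)); rewrite -cats1; split.
  - by rewrite is_walk_cat Hc1 /= Hj.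
  - by rewrite walk_edges_cat mem_cat negb_or kc1 mem_seq1.
  - by rewrite walk_end_cat.
by case: (joins_ends Hj) => ->.
Qed.

Lemma walk_edge_endpoints y t h : walk y t -> h \in walk_edges t ->
  (ends h).1 \in y :: map snd t /\ (ends h).2 \in y :: map snd t.
Proof.
elim: t y => [|[e z] t IHt] y //= /andP [Hj Ht].
rewrite in_cons => /orP [/eqP -> | /(IHt z Ht) [H1 H2]].
  by case: (joins_ends Hj) => ->; rewrite !in_cons !eqxx ?orbT.
by rewrite in_cons H1 in_cons H2 !orbT.
Qed.

Lemma uniq_walk_edges y t : walk y t -> uniq (y :: map snd t) -> uniq (walk_edges t).
Proof.
elim: t y => [|[e z] t IHt] y //= /andP [Hj Ht] /andP [yt Ut].
rewrite (IHt z Ht Ut) andbT; apply/negP=> /(walk_edge_endpoints Ht) [H1 H2].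
by case: (joins_ends Hj) => Eh; [move: H1 | move: H2]; rewrite Eh => /= H; rewrite H in yt.
Qed.

Lemma shorten_walk u s : walk u s -> exists t,
  [/\ walk u t, walk_end u t = walk_end u s,
      {subset walk_edges t <= walk_edges s} & uniq (u :: map snd t)].
Proof.
elim: s u => [|[e z] s IHs] u /=; first by exists [::].
case/andP=> Hj /IHs [t [Ht Et St Ut]].
have St_cons : {subset walk_edges t <= e :: walk_edges s}.
  by move=> h /St sh; rewrite in_cons sh orbT.
have [ut | ut] := boolP (u \in z :: map snd t); last first.
  exists ((e, z) :: t); split; rewrite /= ?Hj ?ut //.
  by move=> h; rewrite !in_cons => /orP [-> | /St ->]; rewrite ?orbT.
move: ut; rewrite in_cons => /orP [/eqP Euz | /map_split [t1 [[e' w] [t2 [Et12 /= Ew]]]]].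
  by subst z; exists t.
subst t w; move: Ht Ut Et St_cons; rewrite is_walk_cat /= => /and3P [_ _ Ht2].
rewrite map_cat cat_uniq /= => /and3P [_ _ /andP [_ Ut2]].
rewrite walk_end_cat /= => Et St_cons; exists t2; split=> // h h2.
by apply: St_cons; rewrite walk_edges_cat mem_cat /= in_cons h2 !orbT.
Qed.

Lemma on_cycle_of_connected_without g :
  conn g (ends g).1 (ends g).2 -> on_cycle ends g.
Proof.
move=> [s [Hs gs Es]]; have [t [Ht Et St Ut]] := shorten_walk Hs.
have gt : g \notin walk_edges t by apply: contra gs => /St.
exists (ends g).1, (rcons t (g, (ends g).1)).
rewrite -cats1 walk_edges_cat mem_cat mem_seq1 eqxx orbT; split=> //.
apply/and5P; split.
- by rewrite is_walk_cat Ht Et Es /= joinsC joins_endpoints.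
- by case: t {Ht Et St Ut gt}.
- by rewrite walk_end_cat.
- by rewrite walk_edges_cat cat_uniq (uniq_walk_edges Ht Ut) /= orbF gt.
- by move: Ut => /= /andP [ut Ut]; rewrite map_cat cat_uniq Ut /= orbF ut.
Qed.

Lemma side_has_cycle_connected g v w :
  conn g v w -> side_has_cycle ends g w -> side_has_cycle ends g v.
Proof.
by move=> Cvw [y [c [Hc gc Cwy]]]; exists y, c; split=> //; apply: connected_without_trans Cwy.
Qed.

Lemma walk_avoids_unreachable e g w s : walk w s -> e \notin walk_edges s ->
  ~ conn e w (ends g).1 -> g \notin walk_edges s.
Proof.
move=> Hs es Nw; apply/negP=> gs; apply: Nw.
by have [] := connected_without_walk_ends Hs gs es.
Qed.

(* The cycle on the [w]-side of [e] and the path to it stay in the component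
   of [w] in H - e, which does not contain [g]. *)
Lemma side_has_cycle_unreachable e g w :
  side_has_cycle ends e w -> ~ conn e w (ends g).1 -> side_has_cycle ends g w.
Proof.
move=> [y [c [Hc ec [s [Hs es Es]]]]] Nw.
have Hsc : walk w (s ++ c) by rewrite is_walk_cat Hs Es (is_cycle_walk Hc).
have esc : e \notin walk_edges (s ++ c) by rewrite walk_edges_cat mem_cat negb_or es.
move: (walk_avoids_unreachable Hsc esc Nw).
rewrite walk_edges_cat mem_cat negb_or => /andP [gs gc].
by exists y, c; split=> //; exists s.
Qed.

Lemma essential_side_has_cycle g e v : ~ on_cycle ends g -> e != g ->
  essential ends e -> conn g (ends e).1 v -> side_has_cycle ends g v.
Proof.
move=> Ng eg Ee Cv; apply: side_has_cycle_connected (connected_without_sym Cv) _.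
case: Ee => [[y [c [Hc ec]]] | [Be [S1 S2]]].
  have gc : g \notin walk_edges c by apply/negP=> gc; apply: Ng; exists y, c.
  have [C1 _] := connected_without_walk_ends (is_cycle_walk Hc) ec gc.
  by exists y, c; split=> //; apply: connected_without_sym.
have [C1 | N1] := classic (conn e (ends e).1 (ends g).1); last first.
  exact: side_has_cycle_unreachable S1 N1.
apply: side_has_cycle_connected (connected_without_ends eg) _.
apply: side_has_cycle_unreachable S2 _ => C2; apply: Be.
exact: connected_without_trans C1 (connected_without_sym C2).
Qed.

Lemma essential_of_sides g a b : joins ends g a b -> ~ on_cycle ends g ->
  side_has_cycle ends g a -> side_has_cycle ends g b -> essential ends g.
Proof.
move=> Hj Ng Sa Sb; right; split; first by move/on_cycle_of_connected_without.
by case: (joins_ends Hj) => ->.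
Qed.

End Multigraph.

Theorem lemma5p2 (V E : finType) (ends : E -> V * V) (e f : E)
    (x : V) (s : seq (E * V)) :
  essential ends e -> essential ends f ->
  is_walk ends x s ->
  uniq (walk_edges s) ->
  ohead (walk_edges s) = Some e ->
  ohead (rev (walk_edges s)) = Some f ->
  forall g, g \in walk_edges s -> essential ends g.
Proof.
move=> Ee Ef Hs Us He Hf g /map_split [s1 [[g' b] [s2 [Es /= Eg]]]]; subst s g'.
have [-> // | ge] := eqVneq g e; have [-> // | gf] := eqVneq g f.
have [Cg | Ng] := classic (on_cycle ends g); first by left.
move: Hs Us He Hf; rewrite is_walk_cat /= walk_edges_cat /= => /and3P [Hs1 Hj Hs2].
rewrite cat_uniq /= => /and3P [_ /norP [gs1 _] /andP [gs2 _]].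
case/ohead_cat_cons=> [Eeg | es1]; first by rewrite Eeg eqxx in ge.
case/ohead_rev_cat_cons=> [Efg | fs2]; first by rewrite Efg eqxx in gf.
apply: (essential_of_sides Hj Ng).
- apply: (essential_side_has_cycle Ng _ Ee); first by rewrite eq_sym.
  have [C1 _] := connected_without_walk_ends Hs1 es1 gs1.
  exact: connected_without_trans (connected_without_sym C1) (connected_without_walk Hs1 gs1).
- apply: (essential_side_has_cycle Ng _ Ef); first by rewrite eq_sym.
  by have [C1 _] := connected_without_walk_ends Hs2 fs2 gs2; apply: connected_without_sym.
Qed.
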